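(* Let $\mathbb{M}\in\{\mathbb{N},\mathbb{Z}\}$, let $F:A^{\mathbb{M}}\to A^{\mathbb{M}}$ be a cellular automaton that is not nilpotent, and let $s\in A$ be a spreading state of $F$. Then there exists $c\in A^{\mathbb{M}}$ such that $F^n(c)_j\neq s$ for all $n\in\mathbb{N}$ and all $j\in\mathbb{M}$.
   Context: A CA is a continuous shift-commuting map on the full shift $A^{\mathbb{M}}$ over a finite alphabet, given by a local rule. A state $s$ is spreading if the local rule maps every neighborhood pattern containing $s$ to $s$. $F$ is nilpotent if there is a state $q$ with $F({}^\omega q^\omega)={}^\omega q^\omega$ (constant configuration) such that for every $c$ there is $n$ with $F^n(c)={}^\omega q^\omega$. *)

From mathcomp Require Import all_boot all_order all_algebra.
Set Implicit Arguments. Unset Strict Implicit. Unset Printing Implicit Defensive.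

Definition ca_global (M : Type) (add : M -> M -> M) (A : finType) (k : nat)
  (N : k.-tuple M) (f : k.-tuple A -> A) (c : M -> A) : M -> A :=
  fun j => f [tuple c (add j (tnth N i)) | i < k].

Definition spreading (A : finType) (k : nat) (f : k.-tuple A -> A) (s : A) : Prop :=
  forall p : k.-tuple A, s \in p -> f p = s.

Definition nilpotent (M A : Type) (F : (M -> A) -> (M -> A)) : Prop :=
  exists q : A, (forall j, F (fun _ => q) j = q) /\
    forall c : M -> A, exists n : nat, forall j, iter n F c j = q.

From mathcomp Require Import all_boot all_order all_algebra.
From mathcomp Require Import zify ring.
From Stdlib Require Import Classical ClassicalEpsilon.
Import GRing.Theory Num.Theory.

(* A cell that is not [s] at time T forces, s being spreading, non-[s] cells along its
   whole backward cone, and non-nilpotency provides such a cell for every T. Seen in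
   the frame moving with one offset v0, the cone at time m contains a segment of the
   lattice gZ, g the gcd of the differences of offsets, and these segments grow with T;
   by compactness some configuration avoids [s] on -v0 m + gZ at every time m. As the
   dependence cone of a cell x at time n lies in the coset x + v0 n + gZ, copying this
   configuration onto every coset of gZ avoids [s] everywhere. The one-sided case
   embeds into the two-sided one. *)

Set Implicit Arguments.
Unset Strict Implicit.
Unset Printing Implicit Defensive.

Definition inf_often (P : nat -> Prop) : Prop :=
  forall T0, exists2 t, (T0 <= t)%N & P t.

Lemma inf_often_pigeonhole (B : finType) (h : nat -> B) (P : nat -> Prop) :
  inf_often P -> exists b, inf_often (fun t => P t /\ h t = b).
Proof.
move=> infP; apply: NNPP => none.
have /fin_all_exists [T HT] : forall b : B,
    exists T, forall t, (T <= t)%N -> P t -> h t <> b.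
  move=> b; apply: NNPP => nT; apply: none; exists b => T0.
  apply: NNPP => nt; apply: nT; exists T0 => t le_t Pt htb; apply: nt.
  by exists t.
have [t le_t Pt] := infP (\max_b T b).
exact: (HT (h t) t (leq_trans (leq_bigmax (h t)) le_t) Pt).
Qed.

Definition agree (A : Type) (R : nat) (c c' : int -> A) : Prop :=
  forall x : int, (absz x < R)%N -> c x = c' x.

Lemma agree_trans (A : Type) (R : nat) (c1 c2 c3 : int -> A) :
  agree R c1 c2 -> agree R c2 c3 -> agree R c1 c3.
Proof. by move=> E1 E2 x Rx; rewrite E1 ?E2. Qed.

Lemma agree_le (A : Type) (R R' : nat) (c c' : int -> A) :
  (R <= R')%N -> agree R' c c' -> agree R c c'.
Proof. by move=> le_R E x Rx; apply: E; apply: leq_trans le_R. Qed.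

Section ClusterPoint.
Variables (A : finType) (e : nat -> int -> A).

Definition cluster_window R (w : int -> A) := inf_often (fun t => agree R (e t) w).

Lemma cluster_window_extend R w : cluster_window R w ->
  exists2 w', cluster_window R.+1 w' & agree R w' w.
Proof.
move=> infw.
have [[a b] infab] := inf_often_pigeonhole
  (fun t => (e t (Posz R), e t (- Posz R)%R)) infw.
exists (fun x => if x == Posz R then a else if x == (- Posz R)%R then b else w x).
  move=> T0; have [t le_t [Ew [<- <-]]] := infab T0; exists t => // x Rx.
  by case: eqP => [->|xR] //; case: eqP => [->|xNR] //; apply: Ew; lia.
by move=> x Rx; case: eqP => [xR|_]; last case: eqP => [xNR|//]; lia.
Qed.

(* Nested windows, each chosen once and for all; their union is the cluster point. *)
Lemma cluster_point : exists c, forall R, cluster_window R c.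
Proof.
have /choice [ext Hext] : forall Rw : nat * (int -> A), exists w',
    cluster_window Rw.1 Rw.2 -> cluster_window Rw.1.+1 w' /\ agree Rw.1 w' Rw.2.
  move=> [R w] /=; have [infw | ninfw] := classic (cluster_window R w).
    by have [w' ? ?] := cluster_window_extend infw; exists w'.
  by exists w => /ninfw.
pose W := fix W R := if R is R'.+1 then ext (R', W R') else e 0%N.
have W_cluster R : cluster_window R (W R).
  by elim: R => [|R IH] T0; [exists T0 | have [] := Hext (R, W R) IH].
have W_agree R n : agree R (W (R + n)%N) (W R).
  elim: n => [|n IH]; first by rewrite addn0.
  rewrite addnS; apply: agree_trans IH.
  by apply: agree_le (leq_addr n R) _; have [] := Hext (R + n, W (R + n))%N (W_cluster _).
exists (fun x => W (absz x).+1 x) => R T0.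
have [t le_t Et] := W_cluster R T0; exists t => // x Rx.
rewrite Et //.
have [le_xR | lt_Rx] := leqP (absz x).+1 R.
  by rewrite -(subnKC le_xR) W_agree.
by rewrite -(subnKC (ltnW lt_Rx)); apply/esym/W_agree.
Qed.

End ClusterPoint.

Section SumDifferences.
Variables (I : eqType) (w : I -> int).

Definition wsum (l : seq I) : int := (\sum_(i <- l) w i)%R.

Definition sum_difference (z : int) : Prop :=
  exists lP lQ, z = (wsum lP - wsum lQ)%R.

Lemma wsum_cat l1 l2 : wsum (l1 ++ l2) = (wsum l1 + wsum l2)%R.
Proof. exact: big_cat. Qed.

Lemma wsum_repeat n l : wsum (flatten (nseq n l)) = (wsum l *+ n)%R.
Proof.
elim: n => [|n IH]; first by rewrite /wsum big_nil.
by rewrite [flatten _]/= wsum_cat IH mulrS.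
Qed.

Lemma sum_difference_weight i : sum_difference (w i).
Proof. by exists [:: i], [::]; rewrite /wsum big_seq1 big_nil subr0. Qed.

Lemma sum_differenceD z1 z2 :
  sum_difference z1 -> sum_difference z2 -> sum_difference (z1 + z2)%R.
Proof.
move=> [P1 [Q1 ->]] [P2 [Q2 ->]]; exists (P1 ++ P2), (Q1 ++ Q2).
by rewrite !wsum_cat; ring.
Qed.

Lemma sum_differenceMl (u z : int) : sum_difference z -> sum_difference (u * z)%R.
Proof.
move=> [P [Q ->]]; case: u => n.
  by exists (flatten (nseq n P)), (flatten (nseq n Q)); rewrite !wsum_repeat; lia.
by exists (flatten (nseq n.+1 Q)), (flatten (nseq n.+1 P)); rewrite !wsum_repeat; lia.
Qed.

(* Bezout, one weight at a time: gcdz g (w j) = u * g + v * w j is again a sum difference. *)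
Lemma sum_difference_dvd_all (r : seq I) :
  exists2 g, sum_difference g & {in r, forall i, (g %| w i)%Z}.
Proof.
elim: r => [|j r [g gP g_dvd]]; first by exists 0%R => //; exists [::], [::]; rewrite subrr.
have [u [v Euv]] := Bezoutz g (w j).
exists (gcdz g (w j)).
  rewrite -Euv; apply: sum_differenceD; apply: sum_differenceMl => //.
  exact: sum_difference_weight.
move=> i; rewrite inE => /orP[/eqP -> | ri]; first exact: dvdz_gcdr.
exact: dvdz_trans (dvdz_gcdl _ _) (g_dvd i ri).
Qed.

End SumDifferences.

Lemma wsum_shift (I : eqType) (w w' : I -> int) (a : int) (l : seq I) :
  (forall i, w i = w' i + a)%R -> wsum w l = (wsum w' l + a *+ size l)%R.
Proof.
move=> Ew; elim: l => [|i l IH]; first by rewrite /wsum !big_nil.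
by rewrite /wsum !big_cons -!/(wsum _ _) IH Ew mulrS; ring.
Qed.

Section IntCA.
Variables (A : finType) (k : nat) (N : k.-tuple int) (f : k.-tuple A -> A).
Local Notation F := (ca_global (fun x y : int => (x + y)%R) N f).

Lemma iter_ca_eq_on (P : nat -> int -> Prop) : P 0%N 0%R ->
  (forall m y i, P m y -> P m.+1 (tnth N i + y)%R) ->
  forall m c c' x x', (forall y, P m y -> c (x + y)%R = c' (x' + y)%R) ->
  iter m F c x = iter m F c' x'.
Proof.
move=> P0 PS; elim=> [|m IH] c c' x x' Ecc'.
  by have := Ecc' 0%R P0; rewrite !addr0.
rewrite !iterS /ca_global; congr f; apply: eq_from_tnth => i.
rewrite !tnth_mktuple; apply: IH => y Py.
by rewrite -!addrA; apply: Ecc'; apply: PS.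
Qed.

Lemma iter_ca_shift m c (x z : int) :
  iter m F c (x + z)%R = iter m F (fun y => c (y + z)%R) x.
Proof. by apply: (@iter_ca_eq_on (fun _ _ => True)) => // y _; rewrite addrAC. Qed.

Definition nbhd_radius : nat := \max_(i < k) absz (tnth N i).

Lemma iter_ca_local m c c' (x : int) :
  (forall y : int, (absz y <= m * nbhd_radius)%N -> c (x + y)%R = c' (x + y)%R) ->
  iter m F c x = iter m F c' x.
Proof.
apply: (@iter_ca_eq_on (fun m y => absz y <= m * nbhd_radius)%N) => // n y i le_y.
have := @leq_bigmax _ (fun i => absz (tnth N i)) i; rewrite -/nbhd_radius; lia.
Qed.

Variable s : A.
Hypothesis s_spreading : spreading f s.

Lemma spreading_cone (l : seq 'I_k) t c (x : int) :
  iter (size l + t) F c x != s -> iter t F c (x + wsum (tnth N) l)%R != s.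
Proof.
elim: l x => [|i l IH] x /=; first by rewrite /wsum big_nil addr0.
rewrite /wsum big_cons addrA => Fx; apply: IH; apply: contra Fx => /eqP Fs.
apply/eqP/s_spreading; apply/tnthP; by exists i; rewrite tnth_mktuple -Fs.
Qed.

Variable i0 : 'I_k.
Local Notation v0 := (tnth N i0).
Local Notation d := (fun i => tnth N i - v0)%R.

Lemma spreading_cone_frame (l : seq 'I_k) T m c (a : int) :
  iter T F c a != s -> (size l + m <= T)%N ->
  iter m F c (a + v0 *+ (T - m) + wsum d l)%R != s.
Proof.
move=> FTa le_T; pose l' := l ++ nseq (T - m - size l) i0.
have size_l' : (size l' + m = T)%N by rewrite size_cat size_nseq; lia.
have d_l' : wsum d l' = wsum d l.
  rewrite wsum_cat addrC (_ : wsum d _ = 0%R) ?add0r //.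
  by elim: (T - m - size l)%N => [|n IH]; rewrite /wsum ?big_nil // big_cons subrr add0r.
have -> : (a + v0 *+ (T - m) + wsum d l = a + wsum (tnth N) l')%R.
  rewrite [wsum (tnth N) l'](@wsum_shift _ _ d v0); last by move=> i; rewrite subrK.
  by rewrite d_l' (_ : size l' = T - m)%N; [ring | lia].
by apply: spreading_cone; rewrite size_l'.
Qed.

Lemma ca_const_spreading (j : int) : F (fun _ => s) j = s.
Proof.
by apply: s_spreading; apply/tnthP; exists i0; rewrite tnth_mktuple.
Qed.

Hypothesis F_not_nilpotent : ~ nilpotent F.

Lemma nonnilpotent_witness t (a : int) : exists c, iter t F c a != s.
Proof.
apply: NNPP => none; apply: F_not_nilpotent; exists s; split=> [|c].
  exact: ca_const_spreading.
exists t => j; apply: NNPP => Fj; apply: none.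
exists (fun y => c (y + (j - a))%R); rewrite -iter_ca_shift subrKC.
by apply/eqP.
Qed.

Variables lP lQ : seq 'I_k.
Local Notation g := (wsum d lP - wsum d lQ)%R.

(* The backward cone of a non-[s] cell at time T = K + 2K(|lP| + |lQ|), read along
   the words lP^j ++ lQ^(2K - j), meets every lattice point below at every time m <= K. *)
Lemma lattice_window K : exists e, forall m (z : int), (m <= K)%N -> (absz z <= K)%N ->
  iter m F e (- (v0 *+ m) + z * g)%R != s.
Proof.
pose T := (K + 2 * K * (size lP + size lQ))%N.
have [e FTe] := nonnilpotent_witness T (- (v0 *+ T) - (wsum d lP + wsum d lQ) *+ K)%R.
exists e => m z le_mK le_zK.
pose j := absz (z + Posz K)%R.
pose l := flatten (nseq j lP) ++ flatten (nseq (2 * K - j) lQ).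
have size_rep n (l0 : seq 'I_k) : size (flatten (nseq n l0)) = (size l0 * n)%N.
  by rewrite size_flatten /shape map_nseq sumn_nseq.
have le_l : (size l + m <= T)%N by rewrite size_cat !size_rep; nia.
have := spreading_cone_frame FTe le_l.
rewrite wsum_cat !wsum_repeat.
have Ej : (Posz j = z + Posz K)%R by lia.
have E2Kj : (Posz (2 * K - j) = Posz K - z)%R by lia.
have ETm : (Posz (T - m) = Posz T - Posz m)%R by lia.
rewrite !pmulrn !mulrzz Ej E2Kj ETm; set p := (X in iter m F e X != s -> _).
by rewrite (_ : p = - (v0 * m) + z * g)%R // /p; ring.
Qed.

Lemma lattice_config : exists c, forall m (z : int),
  iter m F c (- (v0 *+ m) + z * g)%R != s.
Proof.
have /choice [E E_window] := lattice_window.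
have [c c_cluster] := cluster_point E.
exists c => m z; set x := (- (v0 *+ m) + z * g)%R.
have [t le_t Et] := c_cluster (absz x + m * nbhd_radius).+1 (m + absz z)%N.
rewrite (@iter_ca_local m c (E t) x) => [|y le_y]; first by apply: E_window; lia.
by rewrite Et //; lia.
Qed.

Hypothesis g_dvd_offsets : forall i, (g %| (tnth N i - v0)%R)%Z.

Lemma avoiding_config_of_dvd_offsets : exists c, forall n (x : int), iter n F c x != s.
Proof.
have [cs cs_avoids] := lattice_config.
exists (fun x => cs (x - (x %% g)%Z)%R) => n x.
set r := ((x + v0 *+ n) %% g)%Z.
rewrite (@iter_ca_eq_on (fun m y => exists z, y = v0 *+ m + z * g)%R _ _ n _ cs x (x - r)%R).
- have -> : (x - r = - (v0 *+ n) + ((x + v0 *+ n) %/ g)%Z * g)%R.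
    have := divz_eq (x + v0 *+ n)%R g; rewrite -/r.
    by set D := ((_ %/ g)%Z * g)%R; lia.
  exact: cs_avoids.
- by exists 0%R; rewrite mulr0n mul0r addr0.
- move=> m y i [z ->]; have /dvdzP [q Eq] := g_dvd_offsets i.
  by exists (z + q)%R; rewrite (_ : tnth N i = q * g + v0)%R ?mulrS; [ring | rewrite -Eq; ring].
- move=> y [z ->]; congr cs.
  by rewrite (_ : x + (v0 *+ n + z * g) = z * g + (x + v0 *+ n))%R ?modzMDl; ring.
Qed.

End IntCA.

Lemma ca_arity0_nilpotent (M : Type) (A : finType) (add : M -> M -> M) (N : 0.-tuple M)
  (f : 0.-tuple A -> A) : nilpotent (ca_global add N f).
Proof.
exists (f [tuple]); split=> [j | c]; first by rewrite /ca_global; congr f; apply: tuple0.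
by exists 1%N => j; rewrite /= /ca_global; congr f; apply: tuple0.
Qed.

Theorem ca_int_avoids_spreading (A : finType) (k : nat) (N : k.-tuple int)
  (f : k.-tuple A -> A) (s : A) :
  ~ nilpotent (ca_global (fun x y : int => (x + y)%R) N f) -> spreading f s ->
  exists c : int -> A, forall n (j : int),
    iter n (ca_global (fun x y : int => (x + y)%R) N f) c j != s.
Proof.
case: k N f => [|k] N f F_not_nilpotent s_spreading.
  by case: F_not_nilpotent; apply: ca_arity0_nilpotent.
have [_ [lP [lQ ->]] g_dvd] :=
  sum_difference_dvd_all (fun i => tnth N i - tnth N ord0)%R (enum 'I_k.+1).
apply: (avoiding_config_of_dvd_offsets s_spreading F_not_nilpotent (lP := lP) (lQ := lQ)).
by move=> i; apply: g_dvd; rewrite mem_enum.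
Qed.

Lemma iter_ca_nat_int (A : finType) (k : nat) (N : k.-tuple nat) (f : k.-tuple A -> A)
  (c : nat -> A) (cZ : int -> A) : (forall j : nat, cZ (Posz j) = c j) ->
  forall n (j : nat), iter n (ca_global addn N f) c j =
    iter n (ca_global (fun x y : int => (x + y)%R) (map_tuple Posz N) f) cZ (Posz j).
Proof.
move=> EcZ; elim=> [|n IH] j /=; first by rewrite EcZ.
rewrite /ca_global; congr f; apply: eq_from_tnth => i.
by rewrite !tnth_mktuple tnth_map IH PoszD.
Qed.

Lemma nilpotent_ca_nat_int (A : finType) (k : nat) (N : k.-tuple nat)
  (f : k.-tuple A -> A) :
  nilpotent (ca_global (fun x y : int => (x + y)%R) (map_tuple Posz N) f) ->
  nilpotent (ca_global addn N f).
Proof.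
move=> [q [Fq nilp]]; exists q; split=> [j | c].
  by have := @iter_ca_nat_int _ _ N f (fun _ => q) (fun _ => q) (fun _ => erefl) 1 j => /= ->.
have [n Fn] := nilp (fun x => c (absz x)); exists n => j.
by rewrite (@iter_ca_nat_int _ _ N f c (fun x => c (absz x))).
Qed.

Theorem proposition2p4 :
  (forall (A : finType) (k : nat) (N : k.-tuple nat) (f : k.-tuple A -> A) (s : A),
     ~ nilpotent (ca_global addn N f) -> spreading f s ->
     exists c : nat -> A, forall (n : nat) (j : nat),
       iter n (ca_global addn N f) c j != s)
  /\
  (forall (A : finType) (k : nat) (N : k.-tuple int) (f : k.-tuple A -> A) (s : A),
     ~ nilpotent (ca_global (fun x y : int => (x + y)%R) N f) -> spreading f s ->
     exists c : int -> A, forall (n : nat) (j : int),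
       iter n (ca_global (fun x y : int => (x + y)%R) N f) c j != s).
Proof.
split; last exact: ca_int_avoids_spreading.
move=> A k N f s F_not_nilpotent s_spreading.
have [cZ cZ_avoids] := ca_int_avoids_spreading
  (contra_not (@nilpotent_ca_nat_int _ _ N f) F_not_nilpotent) s_spreading.
by exists (fun j => cZ (Posz j)) => n j; rewrite (@iter_ca_nat_int _ _ N f _ cZ).
Qed.
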